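(* Suppose the undirected graph $\Gamma^u$ underlying the Hasse diagram $\Gamma$ of $\rho$ is a single cycle and $\Gamma$ has at least two vertices at which both adjacent arrows terminate. Then for every nontrivial group $G$ there exists a transitive function $u:\rho\to G$ that is not trivial. In particular, for the structural matrix algebra $$\begin{pmatrix}k&0&k&k\\0&k&k&k\\0&0&k&0\\0&0&0&k\end{pmatrix}$$ (i.e. $M(\rho,k)$ for $\rho$ on $\{1,2,3,4\}$ generated by $1\rho3,1\rho4,2\rho3,2\rho4$) and any nontrivial group $G$, there is a good $G$-grading that does not arise from a $G$-graded $\rho$-flag, i.e. for which there are no $g_1,\dots,g_4\in G$ with $\deg e_{ij}=g_ig_j^{-1}$ for all $i\rho j$.
   Context: $\rho$ is a preorder on a finite set $\{1,\dots,n\}$; $\mathcal C$ the poset of its equivalence classes ($i\sim j$ iff $i\rho j$ and $j\rho i$; $\hat i\le\hat j$ iff $i\rho j$). $\Gamma$ is the directed graph with vertex set $\mathcal C$ and an arrow from $\alpha$ to $\beta$ iff $\alpha<\beta$ with nothing strictly between; $\Gamma^u$ is $\Gamma$ with orientation forgotten. A transitive function on $\rho$ with values in $G$ is $u:\rho\to G$ with $u(i,j)u(j,r)=u(i,r)$ whenever $i\rho j$, $j\rho r$; it is trivial if there are $g_i\in G$ with $u(i,j)=g_ig_j^{-1}$ for all $i\rho j$. $M(\rho,k)$ ($k$ a field) is the algebra of $n\times n$ matrices with $(i,j)$-entry $0$ when $(i,j)\notin\rho$; a good $G$-grading on it is an algebra $G$-grading in which every matrix unit $e_{ij}$, $i\rho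 j$, is homogeneous (equivalently, given by a transitive function $u$ with $\deg e_{ij}=u(i,j)$). *)

From mathcomp Require Import all_boot.
Set Implicit Arguments. Unset Strict Implicit. Unset Printing Implicit Defensive.

Definition is_group (G : Type) (mul : G -> G -> G) (one : G) (inv : G -> G) : Prop :=
  (forall x y z, mul x (mul y z) = mul (mul x y) z) /\
  (forall x, mul one x = x) /\ (forall x, mul x one = x) /\
  (forall x, mul (inv x) x = one) /\ (forall x, mul x (inv x) = one).

Definition nontrivial_group (G : Type) (one : G) : Prop := exists g : G, g <> one.

Definition is_preorder (n : nat) (rho : rel 'I_n) : Prop :=
  reflexive rho /\ transitive rho.

Section Hasse.
Variables (n : nat) (rho : rel 'I_n).

Definition cls (i : 'I_n) : {set 'I_n} := [set j | rho i j && rho j i].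

(* the vertex set of Gamma: the set of equivalence classes *)
Definition classes : {set {set 'I_n}} := [set cls i | i : 'I_n].

Definition slt (i j : 'I_n) : bool := rho i j && ~~ rho j i.

Definition arrow (A B : {set 'I_n}) : bool :=
  [exists i : 'I_n, exists j : 'I_n,
     [&& A == cls i, B == cls j, slt i j & ~~ [exists k : 'I_n, slt i k && slt k j]]].

Definition adjU (A B : {set 'I_n}) : bool := arrow A B || arrow B A.

Definition sinks : {set {set 'I_n}} :=
  [set A in classes | [forall B in classes, adjU A B ==> arrow B A]].

End Hasse.

Definition is_cycle_graph (T : finType) (V : {set T}) (adj : rel T) : Prop :=
  exists m : nat, 3 <= m /\
  exists f : 'I_m -> T,
    injective f /\ (forall x, x \in V <-> exists k, x = f k) /\
    (forall k l : 'I_m, adj (f k) (f l) = (val l == (val k).+1 %% m) || (val k == (val l).+1 %% m)).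

(* transitive function u : rho -> G (values outside rho are irrelevant) *)
Definition transitive_fun (G : Type) (mul : G -> G -> G) (n : nat) (rho : rel 'I_n)
  (u : 'I_n -> 'I_n -> G) : Prop :=
  forall i j r, rho i j -> rho j r -> mul (u i j) (u j r) = u i r.

Definition trivial_fun (G : Type) (mul : G -> G -> G) (inv : G -> G) (n : nat) (rho : rel 'I_n)
  (u : 'I_n -> 'I_n -> G) : Prop :=
  exists g : 'I_n -> G, forall i j, rho i j -> u i j = mul (g i) (inv (g j)).

(* the preorder on {1,2,3,4} (here 0..3) generated by 1rho3, 1rho4, 2rho3, 2rho4 *)
Definition rho4 : rel 'I_4 := fun i j => (i == j) || ((val i < 2) && (2 <= val j)).

(* Number the classes around the cycle F 0, ..., F (m-1) so that F 0 and F t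
   are two sinks. Sinks have no outgoing arrows, so both closed arcs
   [0, t] and {0} u [t, m-1] are upward closed.  Hence the function equal to g
   on the pairs (x, y) with y in F 0 and x strictly between the two sinks, and
   to 1 elsewhere, is transitive.  A trivialization would be constant along the
   path F 1, ..., F (m-1), which avoids F 0; but F 1 and F (m-1) both lie below
   F 0, and only F 1 lies on the arc, so it would force g = 1.
   The 4-element example is the same construction with g on e_13 only. *)

From mathcomp Require Import all_boot.
From mathcomp Require Import zify.
Set Implicit Arguments. Unset Strict Implicit. Unset Printing Implicit Defensive.

Section Preorder.
Variables (n : nat) (rho : rel 'I_n).
Hypothesis rho_refl : reflexive rho.
Hypothesis rho_tr : transitive rho.

Lemma rho_trans x y z : rho x y -> rho y z -> rho x z.
Proof. exact: rho_tr. Qed.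

Lemma cls_eqP i j : reflect (rho i j && rho j i) (cls rho i == cls rho j).
Proof.
apply: (iffP eqP) => [eq_ij | /andP[ij ji]].
  have : j \in cls rho j by rewrite inE rho_refl.
  by rewrite -eq_ij inE.
apply/setP=> k; rewrite !inE.
by apply/andP/andP=> -[ik ki]; split; apply: rho_trans ik || apply: rho_trans ki _.
Qed.

Lemma le_slt_trans x y z : rho x y -> slt rho y z -> slt rho x z.
Proof.
move=> xy /andP[yz zy]; rewrite /slt (rho_trans xy yz).
by apply: contra zy => /rho_trans; apply.
Qed.

Lemma rho_of_arrow x y : arrow rho (cls rho x) (cls rho y) -> rho x y.
Proof.
case/existsP=> i /existsP[j /and4P[/cls_eqP/andP[xi _] /cls_eqP/andP[_ jy]]].
case/andP=> ij _ _.
exact: rho_trans xi (rho_trans ij jy).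
Qed.

Lemma arrow_asym A B : arrow rho A B -> ~~ arrow rho B A.
Proof.
case/existsP=> i /existsP[j /and4P[/eqP-> /eqP-> /andP[_ ji] _]].
apply/negP=> /existsP[j' /existsP[i' /and4P[/cls_eqP/andP[jj' _]]]].
case/cls_eqP/andP=> _ i'i /andP[j'i' _] _.
by rewrite (rho_trans jj' (rho_trans j'i' i'i)) in ji.
Qed.

Lemma sink_no_arrow A B : A \in sinks rho -> ~~ arrow rho A B.
Proof.
rewrite inE => /andP[_ /forallP/(_ B)]; apply: contraL => AB.
have -> : B \in classes rho.
  by case/existsP: AB => i /existsP[j /and4P[_ /eqP-> _ _]]; apply: imset_f.
by rewrite /adjU AB /= arrow_asym.
Qed.

Lemma arrow_into_sink A B :
  A \in sinks rho -> B \in classes rho -> adjU rho A B -> arrow rho B A.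
Proof. by rewrite inE => /andP[_ /forallP/(_ B)] /implyP/[apply]/implyP. Qed.

(* Induction on #|]x, y]|: either y covers x, or some x < k < y splits it. *)
Lemma upclosed_of_arrow_closed (Y : pred 'I_n) :
  (forall x y, cls rho x = cls rho y -> Y x -> Y y) ->
  (forall x y, arrow rho (cls rho x) (cls rho y) -> Y x -> Y y) ->
  forall x y, rho x y -> Y x -> Y y.
Proof.
move=> Y_cls Y_arrow x y.
move: {2}_.+1 (ltnSn #|[set w | slt rho x w && rho w y]|) => N.
elim: N x y => // N IH x y; rewrite ltnS => card_xy xy Yx.
have [yx | yNx] := boolP (rho y x).
  by apply: Y_cls Yx; apply/eqP/cls_eqP; rewrite xy yx.
have slt_xy : slt rho x y by rewrite /slt xy yNx.
have [/existsP[k /andP[xk ky]] | no_mid] :=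
  boolP [exists k, slt rho x k && slt rho k y].
  have [[xk' _] [ky' kNy]] := (andP xk, andP ky).
  have Yk : Y k.
    apply: (IH x k) _ xk' Yx; apply/(leq_trans _ card_xy)/proper_card/properP.
    split; first by apply/subsetP=> w; rewrite !inE => /andP[-> /rho_trans->].
    by exists y; rewrite !inE ?slt_xy ?rho_refl //= kNy andbF.
  apply: (IH k y) _ ky' Yk; apply/(leq_trans _ card_xy)/proper_card/properP.
  split; first by apply/subsetP=> w; rewrite !inE => /andP[/(le_slt_trans xk')-> ->].
  exists k; rewrite !inE; first by case/andP: ky => ky' _; apply/andP.
  by rewrite /slt andbN.
apply: Y_arrow Yx; apply/existsP; exists x; apply/existsP; exists y.
by rewrite !eqxx slt_xy no_mid.
Qed.

End Preorder.

Section IndicatorFunction.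
Variables (G : Type) (mul : G -> G -> G) (one : G) (inv : G -> G).
Hypothesis G_group : is_group mul one inv.
Variables (n : nat) (rho : rel 'I_n) (Z : rel 'I_n) (g : G).

Definition indicator_fun (i j : 'I_n) : G := if Z i j then g else one.

Lemma indicator_fun_transitive :
  (forall i j r, rho i j -> rho j r -> (Z i j + Z j r)%N = Z i r) ->
  transitive_fun mul rho indicator_fun.
Proof.
have [_ [mul1g [mulg1 _]]] := G_group.
move=> Z_add i j r ij jr; rewrite /indicator_fun.
by move: (Z_add i j r ij jr); case: (Z i j); case: (Z j r); case: (Z i r);
  rewrite ?mul1g ?mulg1.
Qed.

Lemma indicator_fun_nontrivial i i' j :
  g <> one -> rho i j -> rho i' j -> Z i j -> ~~ Z i' j ->
  (forall h : 'I_n -> G,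
     (forall x y, rho x y -> ~~ Z x y -> h x = h y) -> h i = h i') ->
  ~ trivial_fun mul inv rho indicator_fun.
Proof.
have [mulgA [mul1g [mulg1 [mulVg _]]]] := G_group.
move=> g_neq1 ij i'j Zij NZi'j Z_link [h h_triv]; apply: g_neq1.
have h_const x y : rho x y -> ~~ Z x y -> h x = h y.
  move=> xy NZxy; have := h_triv x y xy; rewrite /indicator_fun (negbTE NZxy) => e.
  by rewrite -[h x]mulg1 -(mulVg (h y)) mulgA -e mul1g.
have := h_triv i j ij; rewrite /indicator_fun Zij => ->.
by rewrite (Z_link h h_const) -h_triv // /indicator_fun (negbTE NZi'j).
Qed.

End IndicatorFunction.

Lemma eqn_succ_mod a b m : a < m -> b < m ->
  (b == a.+1 %% m) = (b == a.+1) || (a.+1 == m) && (b == 0).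
Proof.
move=> am bm; case: (ltngtP a.+1 m) => [lt | | am_eq]; last 2 first.
- by rewrite ltnNge am.
- by rewrite am_eq modnn (ltn_eqF bm).
by rewrite modn_small // orbF.
Qed.

Lemma cycle_graph_enum_from (T : finType) (V : {set T}) (adj : rel T) s :
  is_cycle_graph V adj -> s \in V ->
  exists m (F : nat -> T), [/\
    forall k l, k < m -> l < m -> F k = F l -> k = l,
    forall x, x \in V <-> exists2 k, k < m & x = F k,
    forall k l, k < m -> l < m ->
      adj (F k) (F l) = (l == k.+1 %% m) || (k == l.+1 %% m) &
    F 0 = s].
Proof.
case=> m [m_ge3 [f [f_inj [f_onto f_adj]]]] /f_onto[k0 ->].
have m_gt0 : 0 < m by apply: leq_trans m_ge3.
pose F k := f (Ordinal (ltn_pmod (k + k0) m_gt0)).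
have succ_shift k l : l < m ->
    ((l + k0) %% m == ((k + k0) %% m).+1 %% m) = (l == k.+1 %% m).
  move=> lm; rewrite -addn1 modnDml addn1 -addSn.
  by rewrite [_ == _]eqn_modDr (modn_small lm).
exists m, F; split.
- move=> k l km lm /f_inj/(congr1 val)/eqP.
  by rewrite /= [_ == _]eqn_modDr !modn_small // => /eqP.
- move=> x; rewrite f_onto; split=> [[k ->] | [k _ ->]]; last first.
    by exists (Ordinal (ltn_pmod (k + k0) m_gt0)).
  exists ((k + (m - k0)) %% m); first exact: ltn_pmod.
  congr f; apply: val_inj => /=.
  by rewrite modnDml -addnA subnK 1?ltnW // modnDr modn_small.
- by move=> k l km lm; rewrite f_adj /= !succ_shift.
- by rewrite /F; congr f; apply: val_inj; rewrite /= add0n modn_small.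
Qed.

Section CycleWithTwoSinks.
Variables (n : nat) (rho : rel 'I_n).
Hypothesis rho_refl : reflexive rho.
Hypothesis rho_tr : transitive rho.
Variables (m : nat) (F : nat -> {set 'I_n}) (t : nat).
Hypothesis F_inj : forall k l, k < m -> l < m -> F k = F l -> k = l.
Hypothesis F_classes : forall A, A \in classes rho <-> exists2 k, k < m & A = F k.
Hypothesis F_adj : forall k l, k < m -> l < m ->
  adjU rho (F k) (F l) = (l == k.+1 %% m) || (k == l.+1 %% m).
Hypothesis F0_sink : F 0 \in sinks rho.
Hypothesis Ft_sink : F t \in sinks rho.
Hypothesis t_gt0 : 0 < t.
Hypothesis t_lt_m : t < m.

Definition pos (x : 'I_n) : nat := find (fun k => F k == cls rho x) (iota 0 m).

Lemma pos_spec x : pos x < m /\ F (pos x) = cls rho x.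
Proof.
have [k km Fk] : exists2 k, k < m & cls rho x = F k by apply/F_classes/imset_f.
have has_x : has (fun k => F k == cls rho x) (iota 0 m).
  by apply/hasP; exists k; rewrite ?mem_iota ?Fk.
have x_lt : pos x < m by rewrite /pos -[m in _ < m](size_iota 0 m) -has_find.
by split=> //; have /eqP := nth_find 0 has_x; rewrite nth_iota.
Qed.

Lemma pos_lt x : pos x < m. Proof. by case: (pos_spec x). Qed.
Lemma F_pos x : F (pos x) = cls rho x. Proof. by case: (pos_spec x). Qed.

Lemma pos_eq x k : k < m -> cls rho x = F k -> pos x = k.
Proof. by move=> km e; apply: F_inj; rewrite ?pos_lt ?F_pos. Qed.

Lemma pos_rep k : k < m -> exists x, pos x = k.
Proof.
move=> km; have /imsetP[x _ e] : F k \in classes rho by apply/F_classes; exists k.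
by exists x; apply: pos_eq.
Qed.

Lemma same_pos_rho x y : pos x = pos y -> rho x y.
Proof.
move=> e; have /(cls_eqP rho_refl rho_tr)/andP[] // : cls rho x == cls rho y.
by rewrite -!F_pos e.
Qed.

Lemma pos_upclosed (P : pred nat) :
  (forall a b, a < m -> b < m -> arrow rho (F a) (F b) -> P a -> P b) ->
  forall x y, rho x y -> P (pos x) -> P (pos y).
Proof.
move=> P_arrow; apply: (upclosed_of_arrow_closed rho_refl rho_tr) => [x y e | x y].
  by rewrite /pos e.
by rewrite -!F_pos; apply: P_arrow; apply: pos_lt.
Qed.

Lemma arrow_pos a b : a < m -> b < m -> arrow rho (F a) (F b) ->
  [&& a != 0, a != t &
      [|| b == a.+1, a == b.+1, (a.+1 == m) && (b == 0) | (b.+1 == m) && (a == 0)]].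
Proof.
move=> am bm ab; apply/and3P; split.
- by apply: contraTneq ab => ->; apply: (sink_no_arrow rho_refl rho_tr _ F0_sink).
- by apply: contraTneq ab => ->; apply: (sink_no_arrow rho_refl rho_tr _ Ft_sink).
have := F_adj am bm; rewrite /adjU ab /= !eqn_succ_mod // => /esym/orP.
by case=> /orP[] ->; rewrite ?orbT.
Qed.

Lemma pos_sink_upclosed k x y :
  (k == 0) || (k == t) -> rho x y -> pos x = k -> pos y = k.
Proof.
move=> k_sink xy xk; apply/eqP; apply: (pos_upclosed (P := pred1 k)) xy _; last first.
  by rewrite /= xk.
by move=> a b am bm /(arrow_pos am bm) ab /eqP ak; lia.
Qed.

Lemma pos_le_t_upclosed x y : rho x y -> pos x <= t -> pos y <= t.
Proof.
by apply: (pos_upclosed (P := leq^~ t)) => a b am bm /(arrow_pos am bm); lia.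
Qed.

Lemma pos_ge_t_upclosed x y :
  rho x y -> (pos x == 0) || (t <= pos x) -> (pos y == 0) || (t <= pos y).
Proof.
apply: (pos_upclosed (P := fun a => (a == 0) || (t <= a))).
by move=> a b am bm /(arrow_pos am bm); lia.
Qed.

Definition arc_to_sink (x y : 'I_n) : bool := (pos y == 0) && (0 < pos x < t).

Lemma arc_to_sink_add i j r : rho i j -> rho j r ->
  (arc_to_sink i j + arc_to_sink j r)%N = arc_to_sink i r.
Proof.
move=> ij jr; rewrite /arc_to_sink.
have [j0 | jN0] := eqVneq (pos j) 0.
  by rewrite (pos_sink_upclosed _ jr j0) // j0 addn0.
have [r0 | rN0] := eqVneq (pos r) 0; rewrite ?andbF //=.
have jNt : pos j != t.
  by apply/eqP=> jt; move: r0; rewrite (pos_sink_upclosed _ jr jt) ?eqxx ?orbT; lia.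
by have := pos_le_t_upclosed ij; have := pos_ge_t_upclosed ij; lia.
Qed.

Lemma arrow_into_sink_pos k :
  0 < k < m -> (k == 1) || (k == m.-1) -> arrow rho (F k) (F 0).
Proof.
move=> /andP[k_gt0 km] k_nb; apply: arrow_into_sink F0_sink _ _.
  by apply/F_classes; exists k.
by rewrite F_adj ?(leq_ltn_trans _ km) // !eqn_succ_mod ?(leq_ltn_trans _ km) //; lia.
Qed.

Lemma arc_to_sink_nontrivial
    (G : Type) (mul : G -> G -> G) (one : G) (inv : G -> G) g :
  is_group mul one inv -> g <> one ->
  ~ trivial_fun mul inv rho (indicator_fun one arc_to_sink g).
Proof.
move=> G_group g_neq1.
have t_neq1 : t != 1.
  apply/eqP=> t1; move: t_lt_m Ft_sink; rewrite t1 => m_gt1.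
  by move/(sink_no_arrow rho_refl rho_tr (F 0)); rewrite arrow_into_sink_pos ?m_gt1.
have [s s0] := pos_rep (leq_ltn_trans (leq0n t) t_lt_m).
have [x1 x1_1] := pos_rep (leq_ltn_trans t_gt0 t_lt_m).
have [xl xl_last] : exists xl, pos xl = m.-1 by apply: pos_rep; lia.
have below_s x : pos x = 1 \/ pos x = m.-1 -> rho x s.
  move=> x_nb; apply: rho_of_arrow rho_refl rho_tr _ _ _.
  by rewrite -!F_pos s0; apply: arrow_into_sink_pos; have := pos_lt x; lia.
have x1s := below_s x1 (or_introl x1_1).
have xls := below_s xl (or_intror xl_last).
apply: (indicator_fun_nontrivial G_group g_neq1 x1s xls).
- by rewrite /arc_to_sink s0 x1_1 /=; lia.
- by rewrite /arc_to_sink xl_last; lia.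
- move=> h h_const.
  have h_eq x y : 0 < pos y -> rho x y -> h x = h y.
    by move=> y_gt0 xy; apply: h_const xy _; rewrite /arc_to_sink eqn0Ngt y_gt0.
  suff h_x1 k : 0 < k < m -> forall x, pos x = k -> h x = h x1.
    by rewrite (h_x1 (m.-1) _ xl xl_last) //; lia.
  elim: k => [// | k IH] /andP[_ km] x xk.
  have [k0 | k_gt0] := posnP k.
    by apply: h_eq; rewrite ?x1_1 // same_pos_rho // x1_1 xk k0.
  have [y yk] := pos_rep (ltnW km).
  rewrite -(IH _ y yk); last by rewrite k_gt0 ltnW.
  have : adjU rho (F k) (F k.+1) by rewrite F_adj ?(ltnW km) // modn_small ?eqxx.
  rewrite -xk -yk !F_pos => /orP[] /(rho_of_arrow rho_refl rho_tr) => [yx | xy].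
    by apply/esym/h_eq; rewrite ?xk.
  by apply: h_eq; rewrite ?yk.
Qed.

Lemma cycle_two_sinks_transitive_fun
    (G : Type) (mul : G -> G -> G) (one : G) (inv : G -> G) :
  is_group mul one inv -> nontrivial_group one ->
  exists u : 'I_n -> 'I_n -> G,
    transitive_fun mul rho u /\ ~ trivial_fun mul inv rho u.
Proof.
move=> G_group [g g_neq1]; exists (indicator_fun one arc_to_sink g); split.
  by apply: (indicator_fun_transitive G_group); apply: arc_to_sink_add.
exact: arc_to_sink_nontrivial.
Qed.

End CycleWithTwoSinks.

Lemma sinks_subset_classes (n : nat) (rho : rel 'I_n) : sinks rho \subset classes rho.
Proof. by apply/subsetP=> A; rewrite inE => /andP[]. Qed.

Definition rho4_corner (i j : 'I_4) : bool := (val i == 0) && (val j == 2).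

Lemma rho4_corner_add i j r : rho4 i j -> rho4 j r ->
  (rho4_corner i j + rho4_corner j r)%N = rho4_corner i r.
Proof.
move=> /orP[/eqP<- | /andP[_ j_ge2]] /orP[/eqP<- | /andP[j_lt2 _]];
  by rewrite /rho4_corner; lia.
Qed.

Theorem mainTheorem14 :
  (forall (n : nat) (rho : rel 'I_n),
     is_preorder rho ->
     is_cycle_graph (classes rho) (adjU rho) ->
     2 <= #|sinks rho| ->
     forall (G : Type) (mul : G -> G -> G) (one : G) (inv : G -> G),
       is_group mul one inv -> nontrivial_group one ->
       exists u : 'I_n -> 'I_n -> G,
         transitive_fun mul rho u /\ ~ trivial_fun mul inv rho u)
  /\
  (forall (G : Type) (mul : G -> G -> G) (one : G) (inv : G -> G),
     is_group mul one inv -> nontrivial_group one ->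
     exists u : 'I_4 -> 'I_4 -> G,
       transitive_fun mul rho4 u /\ ~ trivial_fun mul inv rho4 u).
Proof.
split.
  move=> n rho [rho_refl rho_tr] cyc /card_gt1P[S [T [S_sink T_sink S_neq_T]]].
  have /(subsetP (sinks_subset_classes rho)) S_cls := S_sink.
  have [m [F [F_inj F_classes F_adj F0]]] := cycle_graph_enum_from cyc S_cls.
  have /(subsetP (sinks_subset_classes rho))/F_classes[t t_lt_m Ft] := T_sink.
  have t_gt0 : 0 < t by rewrite lt0n; apply: contra_neq S_neq_T => t0; rewrite Ft t0.
  rewrite -F0 in S_sink; rewrite Ft in T_sink.
  exact: (cycle_two_sinks_transitive_fun rho_refl rho_tr
            F_inj F_classes F_adj S_sink T_sink).
move=> G mul one inv G_group [g g_neq1].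
exists (indicator_fun one rho4_corner g); split.
  by apply: (indicator_fun_transitive G_group); apply: rho4_corner_add.
pose i0 := @Ordinal 4 0 isT; pose i1 := @Ordinal 4 1 isT.
pose i2 := @Ordinal 4 2 isT; pose i3 := @Ordinal 4 3 isT.
apply: (indicator_fun_nontrivial G_group g_neq1 (i := i0) (i' := i1) (j := i2)) => //.
by move=> h h_const; rewrite (h_const i0 i3) // (h_const i1 i3).
Qed.
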